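(* Let $n \in \mathbb{N}$ and let $(F, M, \mathcal{R}, c)$ be an instance of the feasibility problem such that either (i) $c_r \in \{1, 2, \dots, n\}$ for all $r \in \mathcal{R}$ and $R_i > 0$ for every $i = 1, \dots, n$; or (ii) $c_r \in \{2^0, 2^1, \dots, 2^n\}$ for all $r \in \mathcal{R}$ and $R_{2^i} > 0$ for every $i = 0, \dots, n$. Then the instance is feasible if and only if $$F + M \le \sum_{r \in \mathcal{R}} c_r.$$
   Context: An instance $(F, M, \mathcal{R}, c)$ of the feasibility problem (of patient-to-room assignment with gender separation, for a single time period) consists of nonnegative integers $F$ (number of female patients) and $M$ (number of male patients), a finite set $\mathcal{R}$ of rooms, and a capacity $c_r \in \mathbb{N}$ (positive integer) for each room $r \in \mathcal{R}$. The instance is called feasible if there exists a subset $S \subseteq \mathcal{R}$ with $\sum_{r \in S} c_r \ge F$ and $\sum_{r \in \mathcal{R} \setminus S} c_r \ge M$. For $k \in \mathbb{N}$, $R_k := |\{ r \in \mathcal{R} : c_r = k\}|$ denotes the number of rooms of capacity $k$. *)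

From mathcomp Require Import all_boot.
Set Implicit Arguments. Unset Strict Implicit. Unset Printing Implicit Defensive.

(* An instance (F, M, R, c): rooms form a finite type [Room], capacities
   [c : Room -> nat] are positive integers. *)

(* Feasibility: some subset S of rooms holds the F female patients and the
   complement holds the M male patients. *)
Definition feasible (F M : nat) (Room : finType) (c : Room -> nat) : Prop :=
  exists S : {set Room},
    F <= \sum_(r in S) c r /\ M <= \sum_(r in ~: S) c r.

Definition nrooms (Room : finType) (c : Room -> nat) (k : nat) : nat :=
  #|[set r : Room | c r == k]|.

From mathcomp Require Import all_boot.

(* A multiset of capacities in which every capacity exceeds the sum
   of the strictly smaller ones by at most one ("gap-free", Brown's criterion
   for complete sequences) realizes every integer between 0 and its total as a
   subset sum: greedily put the largest room in the subset whenever the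
   remaining rooms alone cannot reach the target.  Taking F as such a subset
   sum shows that F + M <= total capacity is sufficient for feasibility.
   Both families of instances are gap-free: below a capacity k <= n all of
   1, ..., k - 1 occur, and below 2^j all of 2^0, ..., 2^(j-1) occur. *)

Lemma sub_le_sum I (s : seq I) (P P' : pred I) (F : I -> nat) :
  (forall i, P i -> P' i) -> \sum_(i <- s | P i) F i <= \sum_(i <- s | P' i) F i.
Proof. by apply: sub_le_big => // x y; apply: leq_addr. Qed.

Lemma sum_uniq_le (s t : seq nat) :
  uniq s -> {subset s <= t} -> \sum_(v <- s) v <= \sum_(v <- t) v.
Proof.
move=> s_uniq sub_st.
apply: (sub_le_big_seq leqnn) => [x y | v]; first exact: leq_addr.
rewrite (count_uniq_mem v s_uniq); case: (boolP (v \in s)) => // /sub_st v_t.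
by rewrite -has_count has_pred1.
Qed.

Section GapFree.
Variables (Room : finType) (c : Room -> nat).

Definition gap_free (A : {set Room}) :=
  forall r, r \in A -> c r <= (\sum_(r' in A | c r' < c r) c r').+1.

Lemma gap_free_setD1_max (A : {set Room}) m :
  (forall r, r \in A -> c r <= c m) -> gap_free A -> gap_free (A :\ m).
Proof.
move=> m_max gapA r; rewrite in_setD1 => /andP [_ rA].
apply: (leq_trans (gapA r rA)); rewrite ltnS.
apply: sub_le_sum => r' /andP [r'A lt_r'r].
rewrite in_setD1 r'A lt_r'r !andbT; apply: contraTneq lt_r'r => ->.
by rewrite -leqNgt m_max.
Qed.

Lemma gap_free_subset_sum (A : {set Room}) t :
  gap_free A -> t <= \sum_(r in A) c r ->
  exists2 S : {set Room}, S \subset A & \sum_(r in S) c r = t.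
Proof.
have [k] := ubnP #|A|; elim: k A t => // k IH A t.
rewrite ltnS => cardA gapA t_le.
have [A0 | [r0 r0A]] := set_0Vmem A.
  by move: t_le; rewrite A0 big_set0 leqn0 => /eqP ->; exists set0; rewrite ?big_set0.
pose m := [arg max_(r > r0 in A) c r].
have [mA m_max] : m \in A /\ forall r, r \in A -> c r <= c m.
  by rewrite /m; case: arg_maxnP.
have cardAm : #|A :\ m| < k by rewrite (cardsD1 m A) mA in cardA.
have IHm t' := IH (A :\ m) t' cardAm (gap_free_setD1_max _ _ m_max gapA).
have sumA : \sum_(r in A) c r = c m + \sum_(r in A :\ m) c r.
  by rewrite (big_setD1 m).
have [t_le_rest | rest_lt_t] := leqP t (\sum_(r in A :\ m) c r).
  have [S S_sub <-] := IHm t t_le_rest.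
  by exists S; rewrite // (subset_trans S_sub) ?subD1set.
have cm_le_t : c m <= t.
  apply: leq_trans (gapA m mA) _; apply: leq_trans rest_lt_t; rewrite ltnS.
  apply: sub_le_sum => r /andP [rA lt_rm].
  by rewrite in_setD1 rA andbT; apply: contraTneq lt_rm => ->; rewrite ltnn.
have [|S S_sub sumS] := IHm (t - c m); first by rewrite leq_subLR -sumA.
have mS : m \notin S by apply/negP => /(subsetP S_sub); rewrite in_setD1 eqxx.
exists (m |: S); last by rewrite big_setU1 //= sumS subnKC.
by rewrite subUset sub1set mA (subset_trans S_sub) ?subD1set.
Qed.

Lemma sum_split_setC (S : {set Room}) :
  \sum_(r in S) c r + \sum_(r in ~: S) c r = \sum_r c r.
Proof.
rewrite [RHS](bigID (mem S)) /=.
by congr (_ + _); apply: eq_bigl => r; rewrite ?inE.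
Qed.

Lemma feasible_sum_le F M : feasible F M c -> F + M <= \sum_r c r.
Proof. by move=> [S [leF leM]]; rewrite -(sum_split_setC S) leq_add. Qed.

Lemma gap_free_feasibleE F M :
  gap_free [set: Room] -> feasible F M c <-> F + M <= \sum_r c r.
Proof.
move=> gapT; split; first exact: feasible_sum_le.
move=> le_total; have [|S _ sumS] := gap_free_subset_sum _ F gapT.
  rewrite (eq_bigl predT) => [|r]; last by rewrite inE.
  by rewrite (leq_trans _ le_total) ?leq_addr.
exists S; split; first by rewrite sumS.
by rewrite -(leq_add2l (\sum_(r in S) c r)) sum_split_setC sumS.
Qed.

Lemma nrooms_gt0 v : (0 < nrooms c v) = (v \in codom c).
Proof.
rewrite /nrooms card_gt0; apply/set0Pn/codomP => [[r]|[r ->]].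
  by rewrite inE => /eqP <-; exists r.
by exists r; rewrite inE.
Qed.

Lemma sum_values_below_le x (s : seq nat) :
  uniq s -> {subset s <= [pred v in codom c | v < x]} ->
  \sum_(v <- s) v <= \sum_(r | c r < x) c r.
Proof.
move=> s_uniq s_sub.
rewrite -(big_map c (fun v => v < x) id) -[X in _ <= X]big_filter.
apply: sum_uniq_le => // v /s_sub /andP [/codomP [r ->] lt_rx].
by rewrite mem_filter lt_rx map_f ?mem_index_enum.
Qed.

Lemma gap_free_of_values :
  (forall r, exists s : seq nat,
     [/\ uniq s, {subset s <= [pred v in codom c | v < c r]}
        & c r <= (\sum_(v <- s) v).+1]) ->
  gap_free [set: Room].
Proof.
move=> values r _; have [s [s_uniq s_sub le_cr]] := values r.
apply: (leq_trans le_cr); rewrite ltnS (eq_bigl (fun r' => c r' < c r)) => [|r'].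
  exact: sum_values_below_le.
by rewrite inE.
Qed.

Lemma gap_free_consecutive n :
  (forall r, 1 <= c r <= n) -> (forall i, 1 <= i <= n -> 0 < nrooms c i) ->
  gap_free [set: Room].
Proof.
move=> c_range all_occur; apply: gap_free_of_values => r.
have /andP [cr_gt0 cr_le_n] := c_range r.
exists (iota 1 (c r).-1); split.
- exact: iota_uniq.
- move=> v; rewrite mem_iota add1n prednK // => /andP [v_gt0 lt_v_cr].
  rewrite inE /= lt_v_cr -nrooms_gt0 all_occur // v_gt0.
  exact: leq_trans (ltnW _) cr_le_n.
- rewrite -[X in X <= _](prednK cr_gt0) ltnS -[X in X <= _](size_iota 1) -sum1_size.
  rewrite big_seq [X in _ <= X]big_seq; apply: leq_sum => v.
  by rewrite mem_iota => /andP [].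
Qed.

Lemma gap_free_powers2 n :
  (forall r, exists2 i, i <= n & c r = 2 ^ i) ->
  (forall i, i <= n -> 0 < nrooms c (2 ^ i)) ->
  gap_free [set: Room].
Proof.
move=> c_pow all_occur; apply: gap_free_of_values => r.
have [j j_le_n ->] := c_pow r.
exists [seq 2 ^ i | i <- iota 0 j]; split.
- by rewrite map_inj_uniq ?iota_uniq //; apply: expnI.
- move=> v /mapP [i]; rewrite mem_iota add0n => /andP [_ lt_ij] ->.
  rewrite inE /= ltn_exp2l // lt_ij andbT -nrooms_gt0 all_occur //.
  exact: ltnW (leq_trans lt_ij j_le_n).
- rewrite big_map; elim: j {j_le_n} => // j IHj.
  rewrite expnS mul2n -addnn -[j.+1]addn1 iotaD big_cat big_seq1 add0n.
  by rewrite -addSn leq_add2r.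
Qed.

End GapFree.

Theorem mainTheorem1 (n F M : nat) (Room : finType) (c : Room -> nat)
  (cpos : forall r, 0 < c r) :
  ( (forall r, 1 <= c r <= n) /\ (forall i, 1 <= i <= n -> 0 < nrooms c i) )
  \/
  ( (forall r, exists2 i, i <= n & c r = 2 ^ i) /\
    (forall i, i <= n -> 0 < nrooms c (2 ^ i)) ) ->
  (feasible F M c <-> F + M <= \sum_(r : Room) c r).
Proof.
move=> [[c_range all_occur] | [c_pow all_occur]]; apply: gap_free_feasibleE.
  exact: gap_free_consecutive c_range all_occur.
exact: gap_free_powers2 c_pow all_occur.
Qed.
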